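(* Let $R$ be a commutative ring, $C$ a semidualizing $R$-module, and $M$ an $R$-module of finite $G_C$-projective dimension with a strict $G_C$-projective resolution $G$. Then the augmented resolution $0\to C\otimes_R P_n\to\cdots\to C\otimes_R P_1\to G_0\to M\to 0$ is $G_C$-proper, i.e. applying $\operatorname{Hom}_R(H,-)$ to it yields an exact complex for every $G_C$-projective $R$-module $H$.
   Context: $R$ is a commutative ring with identity. An $R$-module $C$ is semidualizing if (a) $C$ admits a projective resolution by finitely generated projective modules, (b) the homothety map $R\to\operatorname{Hom}_R(C,C)$ is an isomorphism, and (c) $\operatorname{Ext}^i_R(C,C)=0$ for all $i\geq 1$. A complete $PC$-resolution is an exact sequence $X=\cdots\to P_1\to P_0\to C\otimes_R Q^0\to C\otimes_R Q^1\to\cdots$ with all $P_i,Q^i$ projective such that $\operatorname{Hom}_R(X,C\otimes_R Q)$ is exact for every projective $Q$; $M$ is $G_C$-projective if $M\cong\operatorname{Coker}(P_1\to P_0)$ for such an $X$. The $G_C$-projective dimension of $M$ is the infimum of lengths of resolutions of $M$ by $G_C$-projective modules. A strict $G_C$-projective resolution of $M$ is a bounded $G_C$-projective resolution $G$ of $M$ with $G_i\cong C\otimes_R P_i$, $P_i$ projective, for every $i\geq1$. *)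

From HB Require Import structures.
From mathcomp Require Import all_boot all_order all_algebra.
Set Implicit Arguments. Unset Strict Implicit. Unset Printing Implicit Defensive.
Import GRing.Theory.
Local Open Scope ring_scope.

Section Defs.
Variable R : comPzRingType.

Definition exact3 (A B C : lmodType R) (f : A -> B) (g : B -> C) : Prop :=
  (forall a, g (f a) = 0) /\ (forall b, g b = 0 -> exists a, f a = b).

Definition surj (A B : lmodType R) (f : A -> B) : Prop :=
  forall b, exists a, f a = b.

Definition is_zero_mod (A : lmodType R) : Prop := forall x : A, x = 0.

(* Hom_R(-, N) applied to A --f--> B --g--> C is exact at Hom(B, N) *)
Definition hom_contra_exact (N A B C : lmodType R) (f : A -> B) (g : B -> C) : Prop :=
  forall h : {linear B -> N}, (forall a, h (f a) = 0) ->
    exists k : {linear C -> N}, forall b, k (g b) = h b.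

(* Hom_R(H, -) applied to A --f--> B --g--> C is exact at Hom(H, B) *)
Definition hom_cov_exact (H A B C : lmodType R) (f : A -> B) (g : B -> C) : Prop :=
  forall h : {linear H -> B}, (forall x, g (h x) = 0) ->
    exists k : {linear H -> A}, forall x, f (k x) = h x.

Definition projective (P : lmodType R) : Prop :=
  forall (A B : lmodType R) (g : {linear A -> B}) (f : {linear P -> B}),
    surj g -> exists h : {linear P -> A}, forall x, g (h x) = f x.

Definition fin_gen (P : lmodType R) : Prop :=
  exists n (v : 'I_n -> P), forall x : P, exists c : 'I_n -> R,
    x = \sum_(i < n) c i *: v i.

Definition bilinear_map (A B T : lmodType R) (b : A -> B -> T) : Prop :=
  (forall (r : R) x y q, b (r *: x + y) q = r *: b x q + b y q) /\
  (forall (r : R) x p q, b x (r *: p + q) = r *: b x p + b x q).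

(* T is (isomorphic to) the tensor product A (x)_R B: universal property *)
Definition is_tensor (A B T : lmodType R) : Prop :=
  exists b : A -> B -> T, bilinear_map b /\
    forall (N : lmodType R) (phi : A -> B -> N), bilinear_map phi ->
      (exists h : {linear T -> N}, forall x y, h (b x y) = phi x y) /\
      (forall h1 h2 : {linear T -> N},
         (forall x y, h1 (b x y) = phi x y) -> (forall x y, h2 (b x y) = phi x y) ->
         forall t, h1 t = h2 t).

Definition proj_resolution (M : lmodType R) (P : nat -> lmodType R)
    (d : forall n, {linear P n.+1 -> P n}) (e : {linear P 0%N -> M}) : Prop :=
  (forall n, projective (P n)) /\ surj e /\ exact3 (d 0%N) e /\
  (forall n, exact3 (d n.+1) (d n)).

(* Ext^i_R(M, N) = 0 for all i >= 1, computed from a projective resolution *)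
Definition Ext_pos_vanish (M N : lmodType R) : Prop :=
  forall (P : nat -> lmodType R) (d : forall n, {linear P n.+1 -> P n})
         (e : {linear P 0%N -> M}), proj_resolution d e ->
    forall n, forall h : {linear P n.+1 -> N}, (forall y, h (d n.+1 y) = 0) ->
      exists k : {linear P n -> N}, forall x, k (d n x) = h x.

Definition semidualizing (C : lmodType R) : Prop :=
  (exists (P : nat -> lmodType R) (d : forall n, {linear P n.+1 -> P n})
          (e : {linear P 0%N -> C}),
      proj_resolution d e /\ forall n, fin_gen (P n)) /\
  (forall r : R, (forall c : C, r *: c = 0) -> r = 0) /\
  (forall f : {linear C -> C}, exists r : R, forall c, f c = r *: c) /\
  Ext_pos_vanish C C.

(* M is G_C-projective: M = Coker(P1 -> P0) for a complete PC-resolution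
   X = ... -> P1 -> P0 -> T0 -> T1 -> ...  with T_n = C (x) Q^n *)
Definition GC_projective (C M : lmodType R) : Prop :=
  exists (P : nat -> lmodType R) (dP : forall n, {linear P n.+1 -> P n})
         (T : nat -> lmodType R) (dT : forall n, {linear T n -> T n.+1})
         (m : {linear P 0%N -> T 0%N}),
    (forall n, projective (P n)) /\
    (forall n, exists Q : lmodType R, projective Q /\ is_tensor C Q (T n)) /\
    (forall n, exact3 (dP n.+1) (dP n)) /\ exact3 (dP 0%N) m /\
    exact3 m (dT 0%N) /\ (forall n, exact3 (dT n) (dT n.+1)) /\
    (forall Q N : lmodType R, projective Q -> is_tensor C Q N ->
       (forall n, hom_contra_exact N (dP n.+1) (dP n)) /\
       hom_contra_exact N (dP 0%N) m /\ hom_contra_exact N m (dT 0%N) /\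
       (forall n, hom_contra_exact N (dT n) (dT n.+1))) /\
    (exists e : {linear P 0%N -> M}, surj e /\
       forall x, e x = 0 <-> exists y, dP 0%N y = x).

Definition GC_proj_resolution (C M : lmodType R) (n : nat) (G : nat -> lmodType R)
    (d : forall i, {linear G i.+1 -> G i}) (e : {linear G 0%N -> M}) : Prop :=
  (forall i, GC_projective C (G i)) /\
  (forall i, (n < i)%N -> is_zero_mod (G i)) /\
  surj e /\ exact3 (d 0%N) e /\ (forall i, exact3 (d i.+1) (d i)).

Definition finite_GC_pd (C M : lmodType R) : Prop :=
  exists n (G : nat -> lmodType R) (d : forall i, {linear G i.+1 -> G i})
         (e : {linear G 0%N -> M}), GC_proj_resolution C n d e.

Definition strict_GC_resolution (C M : lmodType R) (n : nat) (G : nat -> lmodType R)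
    (d : forall i, {linear G i.+1 -> G i}) (e : {linear G 0%N -> M}) : Prop :=
  GC_proj_resolution C n d e /\
  (forall i, (0 < i <= n)%N ->
     exists Q : lmodType R, projective Q /\ is_tensor C Q (G i)).

Definition GC_proper_on (H M : lmodType R) (G : nat -> lmodType R)
    (d : forall i, {linear G i.+1 -> G i}) (e : {linear G 0%N -> M}) : Prop :=
  (forall h : {linear H -> M}, exists k : {linear H -> G 0%N}, forall x, e (k x) = h x) /\
  hom_cov_exact H (d 0%N) e /\
  (forall i, hom_cov_exact H (d i.+1) (d i)).

End Defs.

From HB Require Import structures.
From mathcomp Require Import all_boot all_order all_algebra.
From mathcomp Require Import zify.
From Stdlib Require Import ClassicalDescription.
Set Implicit Arguments. Unset Strict Implicit. Unset Printing Implicit Defensive.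
Import GRing.Theory.
Local Open Scope ring_scope.

(* Present H as the cokernel of ∂ : P_1 -> P_0 in a complete PC-resolution,
   with projection π : P_0 -> H, and let X_0 = M, X_(i+1) = G_i be the
   augmented resolution.  To lift h : H -> X_i through X_(i+1) -> X_i, lift
   h ∘ π to f : P_0 -> X_(i+1) by projectivity of P_0; f descends to H once it
   vanishes on ∂(P_1).  Now f ∘ ∂ lands in the kernel of X_(i+1) -> X_i, so it
   lifts to P_1 -> X_(i+2), and by descending induction, which starts where the
   resolution vanishes, this lift may be taken to vanish on ∂(P_2).  As
   X_(i+2) ≅ C ⊗ Q and Hom(-, C ⊗ Q) is exact on the complete resolution, it
   then extends along ∂ to s : P_0 -> X_(i+2), and subtracting the image of s
   from f gives the required correction. *)

Section ImageSubmodule.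
Variables (R : comPzRingType) (A B : lmodType R) (g : {linear A -> B}).

Definition image_pred : {pred B} :=
  fun b => excluded_middle_informative (exists a, g a = b).

Lemma image_predP b : reflect (exists a, g a = b) (b \in image_pred).
Proof. exact: sumboolP. Qed.

Lemma image_submod_closed : submod_closed image_pred.
Proof.
split; first by apply/image_predP; exists 0; rewrite linear0.
move=> r _ _ /image_predP[a <-] /image_predP[a' <-].
by apply/image_predP; exists (r *: a + a'); rewrite linearP.
Qed.

HB.instance Definition _ :=
  GRing.isSubmodClosed.Build R B image_pred image_submod_closed.

Inductive image_sub : predArgType := ImageSub b & b \in image_pred.
Definition image_val (x : image_sub) := let: ImageSub b _ := x in b.
HB.instance Definition _ := [isSub for image_val].
HB.instance Definition _ := [Choice of image_sub by <:].
HB.instance Definition _ := [SubChoice_isSubZmodule of image_sub by <:].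
HB.instance Definition _ := [SubZmodule_isSubLmodule of image_sub by <:].

Section Corestriction.
Variables (P : lmodType R) (F : {linear P -> B}).
Hypothesis F_image : forall p, F p \in image_pred.

Definition corestr (p : P) : image_sub := Sub (F p) (F_image p).

Lemma corestr_is_linear : linear corestr.
Proof. by move=> r p q; apply: val_inj; rewrite /= linearP. Qed.

HB.instance Definition _ :=
  GRing.isLinear.Build R P image_sub *:%R corestr corestr_is_linear.

End Corestriction.

Lemma mem_image a : g a \in image_pred.
Proof. by apply/image_predP; exists a. Qed.

Lemma corestr_surj : surj (corestr mem_image).
Proof. by case=> b /[dup] /image_predP[a ga_b] b_im; exists a; apply: val_inj. Qed.

End ImageSubmodule.

Lemma projective_lift (R : comPzRingType) (P A B : lmodType R)
    (g : {linear A -> B}) (F : {linear P -> B}) :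
  projective P -> (forall p, exists a, g a = F p) ->
  exists h : {linear P -> A}, forall p, g (h p) = F p.
Proof.
move=> P_proj F_im.
have F_image p : F p \in image_pred g by apply/image_predP.
have [h gh_F] := P_proj _ _ _ (corestr F_image) (@corestr_surj _ _ _ g).
by exists h => p; have /(congr1 val) := gh_F p.
Qed.

Lemma factor_through_surj (R : comPzRingType) (A B Y : lmodType R)
    (e : {linear A -> B}) (f : {linear A -> Y}) :
  surj e -> (forall a, e a = 0 -> f a = 0) ->
  exists k : {linear B -> Y}, forall a, k (e a) = f a.
Proof.
move=> e_surj f_ker.
have e_surj' b : exists a, e a == b by have [a <-] := e_surj b; exists a.
pose s b := xchoose (e_surj' b).
have sK : cancel s e by move=> b; apply/eqP; exact: (xchooseP (e_surj' b)).
have f_eq a a' : e a = e a' -> f a = f a'.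
  by move=> ea; apply/eqP; rewrite -subr_eq0 -linearB f_ker // linearB ea subrr.
have fs_linear : linear (f \o s).
  by move=> r b b'; rewrite /= -linearP; apply: f_eq; rewrite !linearP !sK.
pose k : {linear B -> Y} :=
  HB.pack (f \o s) (GRing.isLinear.Build R B Y *:%R (f \o s) fs_linear).
by exists k => a; apply: f_eq; rewrite sK.
Qed.

Lemma hom_contra_exact_zero (R : comPzRingType) (N A B C : lmodType R)
    (f : A -> B) (g : B -> C) :
  is_zero_mod N -> hom_contra_exact N f g.
Proof. by move=> N0 h _; exists \0 => b; rewrite [LHS]N0 [RHS]N0. Qed.

Section LiftingAlongBoundedResolution.
Variables (R : comPzRingType) (N : nat).
Variables (X : nat -> lmodType R) (dX : forall j, {linear X j.+1 -> X j}).
Hypothesis dX_exact : forall j, exact3 (dX j.+1) (dX j).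
Hypothesis X_bounded : forall j, (N < j)%N -> is_zero_mod (X j).
Variables (P : nat -> lmodType R) (dP : forall m, {linear P m.+1 -> P m}).
Hypothesis P_proj : forall m, projective (P m).
Hypothesis dP_complex : forall m y, dP m (dP m.+1 y) = 0.
Hypothesis hom_P_exact :
  forall j m, (2 <= j)%N -> hom_contra_exact (X j) (dP m.+1) (dP m).

Definition lifts_to_cocycle i j := forall f : {linear P j -> X (j + i).+1},
  (forall y, dX (j + i) (f (dP j y)) = 0) ->
  exists2 f' : {linear P j -> X (j + i).+1},
    forall y, f' (dP j y) = 0 & forall x, dX (j + i) (f' x) = dX (j + i) (f x).

Lemma lifts_to_cocycle_top i j : (N <= j + i)%N -> lifts_to_cocycle i j.
Proof. by move=> Nji f _; exists f => // y; apply: X_bounded. Qed.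

Lemma lifts_to_cocycle_step i j : lifts_to_cocycle i j.+1 -> lifts_to_cocycle i j.
Proof.
move=> IH f df_cycle.
have [g dg] : exists g : {linear P j.+1 -> X (j + i).+2},
    forall y, dX (j + i).+1 (g y) = f (dP j y).
  apply: (projective_lift (F := f \o dP j)) => [|y]; first exact: P_proj.
  exact: (proj2 (dX_exact _)) (df_cycle y).
have [|g' g'_cycle dg'] := IH g.
  by move=> y; rewrite dg dP_complex linear0.
have [s ds] := hom_P_exact (isT : (2 <= (j + i).+2)%N) g'_cycle.
exists (f \- (dX (j + i).+1 \o s)) => [y | x] /=.
  by rewrite ds dg' dg subrr.
by rewrite linearB (proj1 (dX_exact _)) subr0.
Qed.

Lemma lifts_to_cocycle_all i j : lifts_to_cocycle i j.
Proof.
have [k le_k] : exists k, (N - (j + i) <= k)%N by exists (N - (j + i))%N.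
elim: k j le_k => [|k IH] j le_k; first by apply: lifts_to_cocycle_top; lia.
have [Nji|jiN] := leqP N (j + i); first exact: lifts_to_cocycle_top.
by apply/lifts_to_cocycle_step/IH; lia.
Qed.

Variables (H : lmodType R) (pi : {linear P 0%N -> H}).
Hypothesis pi_surj : surj pi.
Hypothesis pi_ker : forall x, pi x = 0 <-> exists y, dP 0%N y = x.

Lemma hom_lift i (h : {linear H -> X i}) : (forall x, exists a, dX i a = h x) ->
  exists k : {linear H -> X i.+1}, forall x, dX i (k x) = h x.
Proof.
move=> h_im.
have [f df] : exists f : {linear P 0%N -> X i.+1}, forall p, dX i (f p) = h (pi p).
  by apply: (projective_lift (F := h \o pi)) => [|p]; [apply: P_proj | apply: h_im].
have [|f' f'_cycle df'] := @lifts_to_cocycle_all i 0%N f.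
  by move=> y; rewrite df (proj2 (pi_ker _)) ?linear0 //; exists y.
have f'_ker p : pi p = 0 -> f' p = 0 by move=> /pi_ker[y <-].
have [k kpi] := factor_through_surj pi_surj f'_ker.
exists k => x; have [p <-] := pi_surj x.
by rewrite kpi df' df.
Qed.

Lemma hom_cov_exact_resolution i : hom_cov_exact H (dX i.+1) (dX i).
Proof. by move=> h h_cycle; apply: hom_lift => x; apply: (proj2 (dX_exact i)). Qed.

End LiftingAlongBoundedResolution.

Section Augmentation.
Variables (R : comPzRingType) (C M : lmodType R) (n : nat) (G : nat -> lmodType R).
Variables (d : forall i, {linear G i.+1 -> G i}) (e : {linear G 0%N -> M}).

Definition augment j : lmodType R := if j is i.+1 then G i else M.

Definition augment_d j : {linear augment j.+1 -> augment j} :=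
  match j return {linear augment j.+1 -> augment j} with
  | 0%N => e
  | i.+1 => d i
  end.

Lemma augment_exact : GC_proj_resolution C n d e ->
  forall j, exact3 (augment_d j.+1) (augment_d j).
Proof. by case=> _ [_ [_ [de d_exact]]] [|j]; [apply: de | apply: d_exact]. Qed.

Lemma augment_bounded : GC_proj_resolution C n d e ->
  forall j, (n.+1 < j)%N -> is_zero_mod (augment j).
Proof. by case=> _ [G_bounded _] [|j] //; apply: G_bounded. Qed.

Lemma augment_hom_contra_exact (P : nat -> lmodType R)
    (dP : forall m, {linear P m.+1 -> P m}) :
  strict_GC_resolution C n d e ->
  (forall Q T, projective Q -> is_tensor C Q T ->
     forall m, hom_contra_exact T (dP m.+1) (dP m)) ->
  forall j m, (2 <= j)%N -> hom_contra_exact (augment j) (dP m.+1) (dP m).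
Proof.
move=> [[_ [G_bounded _]] G_tensor] hom_exact [|[|j]] // m _ /=.
have [jn|nj] := leqP j.+1 n; last exact/hom_contra_exact_zero/G_bounded.
have [Q [Q_proj QT]] := G_tensor j.+1 jn.
exact: hom_exact Q_proj QT m.
Qed.

End Augmentation.

Theorem proposition3p4 (R : comPzRingType) (C M : lmodType R) :
  semidualizing C -> finite_GC_pd C M ->
  forall (n : nat) (G : nat -> lmodType R) (d : forall i, {linear G i.+1 -> G i})
         (e : {linear G 0%N -> M}),
    strict_GC_resolution C n d e ->
    forall H : lmodType R, GC_projective C H -> GC_proper_on H d e.
Proof.
move=> _ _ n G d e strict H.
move=> [P [dP [T [dT [dPT [P_proj [_ [dP_exact [_ [_ [_ [hom_exact [pi [pi_surj pi_ker]]]]]]]]]]]]]].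
have [res _] := strict; have [_ [_ [e_surj _]]] := res.
have dP_complex m y : dP m (dP m.+1 y) = 0 by case: (dP_exact m).
have hom_P_exact := augment_hom_contra_exact strict
  (fun Q CQ Q_proj CQ_tensor => (hom_exact Q CQ Q_proj CQ_tensor).1).
have lift := hom_lift (augment_exact res) (augment_bounded res) P_proj dP_complex
  hom_P_exact pi_surj pi_ker.
have hom_exact_at := hom_cov_exact_resolution (augment_exact res)
  (augment_bounded res) P_proj dP_complex hom_P_exact pi_surj pi_ker.
split; first by move=> h; apply: (lift 0%N h) => x; apply: e_surj.
by split; [apply: (hom_exact_at 0%N) | move=> i; apply: (hom_exact_at i.+1)].
Qed.
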